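(* For every disjunctive program $P$ the following are equivalent: (1) $P$ is finitely recursive; (2) $P$ has a smooth splitting sequence of length $\mu\le\omega$.
   Context: A disjunctive program is a set of rules $A_1\vee\dots\vee A_m\leftarrow L_1,\dots,L_n$ ($m>0$, $n\ge0$), $A_j$ atoms, $L_i$ atoms or negated atoms $\mathtt{not}\,A$, possibly with function symbols; $head(r)=\{A_1,\dots,A_m\}$; $\mathsf{Ground}(P)$ is its ground instantiation and $\mathit{atom}(r)$, $\mathit{atom}(\mathsf{Ground}(P))$ denote the sets of ground atoms occurring in $r$, resp. in $\mathsf{Ground}(P)$. The dependency graph of $P$ has ground atoms as vertices and an edge $A\to B$ whenever for some $r\in\mathsf{Ground}(P)$, $A\in head(r)$ and $B$ occurs in $r$ (body, positive or negated, or head). $A$ depends on $B$ if there is a directed path from $A$ to $B$ (every atom depends on itself). $P$ is finitely recursive iff every ground atom depends on finitely many ground atoms. A splitting set of $P$ is a set $U$ of ground atoms such that for all $r\in\mathsf{Ground}(P)$, $head(r)\cap U\ne\emptyset$ implies $\mathit{atom}(r)\subseteq U$. A (transfinite) sequence is a family indexed by $\{\alpha:\alpha<\mu\}$ for an ordinal $\mu$ (its length). A splitting sequence for $P$ is a sequence $\langle U_\alpha\rangle_{\alpha<\mu}$ of splitting sets of $P$ that is monotone ($U_\alpha\subseteq U_\beta$ for $\alpha<\beta$), continuous ($U_\lambda=\bigcup_{\nu<\lambda}U_\nu$ for limit $\lambda<\mu$), and satisfies $\bigcup_{\alpha<\mu}U_\alpha=\mathit{atom}(\mathsf{Ground}(P))$.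 A sequence $\langle X_\alpha\rangle_{\alpha<\mu}$ is smooth iff $X_0$ is finite and $X_{\alpha+1}\setminus X_\alpha$ is finite for every $\alpha+1<\mu$. *)

From Stdlib Require Import List Relations.
Import ListNotations.

(* Terms over a countable vocabulary: variables and function symbols are
   indexed by nat; a function symbol is identified by its name together with
   the number of arguments it is applied to (constants have arity 0). *)
Inductive term : Type :=
| Var : nat -> term
| Fn  : nat -> list term -> term.

Record atom : Type := mkAtom { pred_sym : nat ; args : list term }.

Inductive literal : Type :=
| Pos : atom -> literal
| Neg : atom -> literal.

Definition lit_atom (l : literal) : atom :=
  match l with Pos a => a | Neg a => a end.

(* A1 v ... v Am <- L1, ..., Ln *)
Record rule : Type := mkRule { head : list atom ; body : list literal }.

Definition program := rule -> Prop.

Definition disjunctive_program (P : program) : Prop :=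
  forall r, P r -> head r <> [].

Definition atom_of_rule (r : rule) (A : atom) : Prop :=
  In A (head r) \/ exists l, In l (body r) /\ lit_atom l = A.

Inductive sym_in_term (f n : nat) : term -> Prop :=
| sit_here : forall ts, length ts = n -> sym_in_term f n (Fn f ts)
| sit_deep : forall g ts t, In t ts -> sym_in_term f n t -> sym_in_term f n (Fn g ts).

Definition sym_in_program (P : program) (f n : nat) : Prop :=
  exists r A t, P r /\ atom_of_rule r A /\ In t (args A) /\ sym_in_term f n t.

(* Herbrand universe of P: ground terms built from the function symbols of P;
   if P has no constant, an arbitrary constant (here Fn 0 []) is added. *)
Inductive hterm (P : program) : term -> Prop :=
| ht_fn : forall f ts, sym_in_program P f (length ts) ->
            Forall (hterm P) ts -> hterm P (Fn f ts)
| ht_dflt : ~ (exists c, sym_in_program P c 0) -> hterm P (Fn 0 []).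

Fixpoint subst (s : nat -> term) (t : term) : term :=
  match t with
  | Var v => s v
  | Fn f ts => Fn f (map (subst s) ts)
  end.

Definition subst_atom (s : nat -> term) (A : atom) : atom :=
  mkAtom (pred_sym A) (map (subst s) (args A)).

Definition subst_lit (s : nat -> term) (l : literal) : literal :=
  match l with Pos a => Pos (subst_atom s a) | Neg a => Neg (subst_atom s a) end.

Definition subst_rule (s : nat -> term) (r : rule) : rule :=
  mkRule (map (subst_atom s) (head r)) (map (subst_lit s) (body r)).

Definition Ground (P : program) : program :=
  fun r' => exists r s, P r /\ (forall v, hterm P (s v)) /\ r' = subst_rule s r.

Definition atom_Ground (P : program) (A : atom) : Prop :=
  exists r, Ground P r /\ atom_of_rule r A.

Inductive ground_term : term -> Prop :=
| gt_fn : forall f ts, Forall ground_term ts -> ground_term (Fn f ts).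

Definition ground_atom (A : atom) : Prop := Forall ground_term (args A).

Definition dep_edge (P : program) (A B : atom) : Prop :=
  exists r, Ground P r /\ In A (head r) /\ atom_of_rule r B.

Definition depends_on (P : program) : relation atom :=
  clos_refl_trans atom (dep_edge P).

Definition finite_set {T : Type} (X : T -> Prop) : Prop :=
  exists l : list T, forall x, X x -> In x l.

Definition finitely_recursive (P : program) : Prop :=
  forall A, ground_atom A -> finite_set (fun B => depends_on P A B).

Definition splitting_set (P : program) (U : atom -> Prop) : Prop :=
  forall r, Ground P r ->
    (exists A, In A (head r) /\ U A) -> forall B, atom_of_rule r B -> U B.

(* A length mu <= omega: [None] is omega, [Some n] is the finite ordinal n. *)
Definition length_le_omega := option nat.

Definition below (mu : length_le_omega) (i : nat) : Prop :=
  match mu with None => True | Some n => i < n end.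

(* A splitting sequence <U_i>_{i<mu}.  Continuity is vacuous, since there
   is no (nonzero) limit ordinal < mu <= omega. *)
Definition splitting_sequence (P : program) (mu : length_le_omega)
    (U : nat -> atom -> Prop) : Prop :=
  (forall i, below mu i -> splitting_set P (U i)) /\
  (forall i j, below mu i -> below mu j -> i < j -> forall A, U i A -> U j A) /\
  (forall A, (exists i, below mu i /\ U i A) <-> atom_Ground P A).

Definition smooth (mu : length_le_omega) (X : nat -> atom -> Prop) : Prop :=
  (below mu 0 -> finite_set (X 0)) /\
  (forall i, below mu (S i) -> finite_set (fun A => X (S i) A /\ ~ X i A)).

(* Forward direction: enumerate the ground atoms A_0, A_1, ... of P through an
   injective coding into nat, and let U_i be the set of atoms on which some
   A_k with k < i depends.  Each U_i is closed under dependency, hence a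
   splitting set, and U_{i+1} \ U_i consists of atoms on which A_i depends,
   a finite set when P is finitely recursive.  Backward direction: smoothness
   makes every U_i finite, and a splitting set containing A contains every
   atom A depends on; atoms outside atom(Ground(P)) depend only on themselves. *)
From Stdlib Require Import List Relations Arith Lia Classical Cantor.
Import ListNotations.

Lemma finite_set_incl {T : Type} (X Y : T -> Prop) :
  (forall x, X x -> Y x) -> finite_set Y -> finite_set X.
Proof. intros HXY [l Hl]. exists l. auto. Qed.

Lemma finite_set_union {T : Type} (X Y : T -> Prop) :
  finite_set X -> finite_set Y -> finite_set (fun x => X x \/ Y x).
Proof.
  intros [l1 Hl1] [l2 Hl2]. exists (l1 ++ l2).
  intros x [Hx | Hx]; apply in_or_app; auto.
Qed.

Lemma below_S mu i : below mu (S i) -> below mu i.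
Proof. destruct mu; simpl; lia. Qed.

Lemma smooth_finite mu (X : nat -> atom -> Prop) :
  smooth mu X -> forall i, below mu i -> finite_set (X i).
Proof.
  intros [HX0 HXS] i. induction i as [|i IH]; intro Hi; auto.
  apply (finite_set_incl _ (fun A => X i A \/ (X (S i) A /\ ~ X i A))).
  - intros A HA. destruct (classic (X i A)); auto.
  - apply finite_set_union; auto using below_S.
Qed.

Fixpoint hterm_ground P t (H : hterm P t) : ground_term t :=
  match H with
  | ht_fn _ f ts _ Hts => gt_fn f ts
      ((fix go l (F : Forall (hterm P) l) : Forall ground_term l :=
          match F with
          | Forall_nil _ => Forall_nil _
          | Forall_cons _ Ht F' => Forall_cons _ (hterm_ground P _ Ht) (go _ F')
          end) ts Hts)
  | ht_dflt _ _ => gt_fn 0 [] (Forall_nil _)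
  end.

Fixpoint subst_ground s (Hs : forall v, ground_term (s v)) t : ground_term (subst s t) :=
  match t with
  | Var v => Hs v
  | Fn f ts => gt_fn f _
      ((fix go l : Forall ground_term (map (subst s) l) :=
          match l with
          | [] => Forall_nil _
          | t :: l => Forall_cons _ (subst_ground s Hs t) (go l)
          end) ts)
  end.

Lemma subst_atom_ground s (Hs : forall v, ground_term (s v)) A :
  ground_atom (subst_atom s A).
Proof.
  apply Forall_forall. intros t Ht. apply in_map_iff in Ht.
  destruct Ht as [t0 [<- _]]. apply subst_ground, Hs.
Qed.

Lemma atom_Ground_ground P A : atom_Ground P A -> ground_atom A.
Proof.
  intros [r [[r0 [s [_ [Hs ->]]]] HA]].
  assert (Hsg : forall v, ground_term (s v)) by (intro v; apply (hterm_ground P), Hs).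
  destruct HA as [Hin | [l [Hin <-]]]; simpl in Hin; apply in_map_iff in Hin.
  - destruct Hin as [A0 [<- _]]. apply subst_atom_ground, Hsg.
  - destruct Hin as [[A0 | A0] [<- _]]; apply subst_atom_ground, Hsg.
Qed.

Lemma depends_on_atom_Ground P A B :
  depends_on P A B -> atom_Ground P A -> atom_Ground P B.
Proof.
  induction 1 as [A B [r [Hr [_ HB]]] | | ]; auto.
  intros _. exists r. auto.
Qed.

Lemma depends_on_eq_or_atom_Ground P A B :
  depends_on P A B -> A = B \/ atom_Ground P A.
Proof.
  induction 1 as [A B [r [Hr [HA _]]] | | A B C _ [<- | HA] _ IH]; auto.
  right. exists r. split; [exact Hr | left; exact HA].
Qed.

Lemma splitting_set_depends_on P U A B :
  splitting_set P U -> depends_on P A B -> U A -> U B.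
Proof.
  intros HU Hdep. induction Hdep as [A B [r [Hr [HA HB]]] | | ]; auto.
  intro HUA. apply (HU r Hr); eauto.
Qed.

Lemma dependency_closure_splitting_set P (S : atom -> Prop) :
  splitting_set P (fun B => exists A, S A /\ depends_on P A B).
Proof.
  intros r Hr [A' [HA' [A [HSA Hdep]]]] B HB.
  exists A. split; [exact HSA |].
  apply rt_trans with A'; [exact Hdep | apply rt_step; exists r; auto].
Qed.

Fixpoint term_code (t : term) : nat :=
  match t with
  | Var v => to_nat (0, v)
  | Fn f ts => to_nat (S f, (fix list_code l := match l with
                                               | [] => 0
                                               | t :: l => S (to_nat (term_code t, list_code l))
                                               end) ts)
  end.

Lemma to_nat_inj p q : to_nat p = to_nat q -> p = q.
Proof. intro H. rewrite <- (cancel_of_to p), <- (cancel_of_to q), H. reflexivity. Qed.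

Local Opaque to_nat.

Lemma term_code_inj : forall t t', term_code t = term_code t' -> t = t'.
Proof.
  fix IH 1.
  intros [v | f ts] [v' | f' ts'] H; simpl in H; apply to_nat_inj in H;
    try discriminate H.
  - injection H as ->. reflexivity.
  - injection H as -> Hts. f_equal. revert ts ts' Hts. fix IHl 1.
    intros [|t l] [|t' l'] Hl; try discriminate Hl; try reflexivity.
    injection Hl as Hl. apply to_nat_inj in Hl. injection Hl as Ht Hl.
    rewrite (IH t t' Ht), (IHl l l' Hl). reflexivity.
Qed.

Definition atom_code (A : atom) : nat := term_code (Fn (pred_sym A) (args A)).

Lemma atom_code_inj A B : atom_code A = atom_code B -> A = B.
Proof.
  intro H. apply term_code_inj in H. injection H as Hp Ha.
  destruct A, B; simpl in *; subst; reflexivity.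
Qed.

Definition dependency_layer (P : program) (i : nat) (B : atom) : Prop :=
  exists A, (atom_Ground P A /\ atom_code A < i) /\ depends_on P A B.

Lemma dependency_layer_splitting_sequence P :
  splitting_sequence P None (dependency_layer P).
Proof.
  split; [| split].
  - intros i _. apply dependency_closure_splitting_set.
  - intros i j _ _ Hij B [A [[HA Hi] Hdep]]. exists A. split; [split; [exact HA | lia] | exact Hdep].
  - intro B. split.
    + intros [i [_ [A [[HA _] Hdep]]]]. exact (depends_on_atom_Ground P A B Hdep HA).
    + intro HB. exists (S (atom_code B)). split; [exact I |].
      exists B. split; [split; [exact HB | lia] | apply rt_refl].
Qed.

Lemma dependency_layer_step P i B :
  dependency_layer P (S i) B -> ~ dependency_layer P i B ->
  exists A, (atom_Ground P A /\ atom_code A = i) /\ depends_on P A B.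
Proof.
  intros [A [[HA Hi] Hdep]] Hnot. exists A. split; [split; [exact HA |] | exact Hdep].
  destruct (Nat.eq_dec (atom_code A) i) as [E | E]; [exact E |].
  exfalso. apply Hnot. exists A. split; [split; [exact HA | lia] | exact Hdep].
Qed.

Lemma dependency_layer_smooth P :
  finitely_recursive P -> smooth None (dependency_layer P).
Proof.
  intro Hfr. split.
  - intros _. exists []. intros B [A [[_ Hlt] _]]. lia.
  - intros i _.
    apply (finite_set_incl _ (fun B => exists A,
             (atom_Ground P A /\ atom_code A = i) /\ depends_on P A B)).
    { intros B [HB Hnot]. exact (dependency_layer_step P i B HB Hnot). }
    destruct (classic (exists A, atom_Ground P A /\ atom_code A = i))
      as [[A [HA Hcode]] | Hnone].
    + refine (finite_set_incl _ _ _ (Hfr A (atom_Ground_ground P A HA))).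
      intros B [A' [[_ Hcode'] Hdep]].
      rewrite (atom_code_inj A' A) in Hdep by congruence. exact Hdep.
    + exists []. intros B [A [HA _]]. exact (Hnone (ex_intro _ A HA)).
Qed.

Lemma finitely_recursive_of_smooth_splitting_sequence P mu U :
  splitting_sequence P mu U -> smooth mu U -> finitely_recursive P.
Proof.
  intros [HU [_ Hcover]] Hsmooth A _.
  destruct (classic (atom_Ground P A)) as [HA | HA].
  - apply Hcover in HA. destruct HA as [i [Hi HUA]].
    apply (finite_set_incl _ _ (fun B Hdep => splitting_set_depends_on P _ A B (HU i Hi) Hdep HUA)).
    exact (smooth_finite mu U Hsmooth i Hi).
  - exists [A]. intros B Hdep.
    destruct (depends_on_eq_or_atom_Ground P A B Hdep) as [<- | HA']; [left; reflexivity | tauto].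
Qed.

Theorem corollary3p5 (P : program) :
  disjunctive_program P ->
  (finitely_recursive P <->
   exists (mu : length_le_omega) (U : nat -> atom -> Prop),
     splitting_sequence P mu U /\ smooth mu U).
Proof.
  intros _. split.
  - intro Hfr. exists None, (dependency_layer P).
    split; [apply dependency_layer_splitting_sequence | apply dependency_layer_smooth, Hfr].
  - intros [mu [U [Hseq Hsmooth]]].
    exact (finitely_recursive_of_smooth_splitting_sequence P mu U Hseq Hsmooth).
Qed.
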